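(* Let $G$ be a group and $H$ a subnormal subgroup of $G$. Then for every subgroup $K \leqslant G$ of finite index, $|HK:K|$ divides $|G:K|$.
   Context: For subgroups $H,K$ of a group $G$, $|HK:K|$ denotes the number of cosets of $K$ that intersect $H$ (equivalently $|H : H \cap K|$). $H$ is subnormal in $G$ if there is a finite chain $H = H_0 \lhd H_1 \lhd \dots \lhd H_r = G$. *)

(* abstract (possibly infinite) groups via mathcomp's
   monoid.v [groupType]; subgroups are Prop-valued predicates (membership in a
   subgroup of an infinite group need not be decidable). *)
From HB Require Import structures.
From mathcomp Require Import all_boot.
From mathcomp Require Import monoid.
Set Implicit Arguments. Unset Strict Implicit. Unset Printing Implicit Defensive.
Local Open Scope group_scope.

Section Defs.
Variable G : groupType.

Definition subgroup (H : G -> Prop) : Prop :=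
  H 1 /\ (forall x y, H x -> H y -> H (x * y)) /\ (forall x, H x -> H x^-1).

Definition normal_in (H L : G -> Prop) : Prop :=
  subgroup H /\ subgroup L /\ (forall x, H x -> L x) /\
  (forall x y, H x -> L y -> H (y^-1 * x * y)).

Inductive subnormal : (G -> Prop) -> Prop :=
| subnormal_top : forall H, (forall x, H x) -> subnormal H
| subnormal_step : forall H L, normal_in H L -> subnormal L -> subnormal H.

Definition has_index (K : G -> Prop) (n : nat) : Prop :=
  exists s : seq G, size s = n /\
    (forall i j, i < n -> j < n -> i <> j -> ~ K ((nth 1 s i)^-1 * nth 1 s j)) /\
    (forall g, exists2 i, i < n & K ((nth 1 s i)^-1 * g)).

(* |HK : K| = m: exactly m left cosets of K intersect H, i.e. there are m
   elements h_i of H in pairwise distinct cosets h_i K, and every element of H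
   lies in one of them. *)
Definition cosets_meeting (H K : G -> Prop) (m : nat) : Prop :=
  exists s : seq G, size s = m /\
    (forall i, i < m -> H (nth 1 s i)) /\
    (forall i j, i < m -> j < m -> i <> j -> ~ K ((nth 1 s i)^-1 * nth 1 s j)) /\
    (forall h, H h -> exists2 i, i < m & K ((nth 1 s i)^-1 * h)).

End Defs.

(** For H normal in L, the right translates H x with
    x in L partition the cosets meeting L into blocks; since H x = x H, each
    block is the image of the cosets meeting H under the injective left action
    of x on cosets, so [|LK:K| = #blocks * |HK:K|].  Walking up a subnormal
    series to [G], where all [n] cosets are met, gives [|HK:K| %| |G:K|]. *)

From HB Require Import structures.
From mathcomp Require Import all_boot monoid boolp.
Set Implicit Arguments. Unset Strict Implicit. Unset Printing Implicit Defensive.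

Local Open Scope group_scope.

Section Subgroup.
Variables (G : groupType) (H : G -> Prop).
Hypothesis sgH : subgroup H.

Lemma subgroup1 : H 1.
Proof. by case: sgH. Qed.

Lemma subgroupM x y : H x -> H y -> H (x * y).
Proof. by case: sgH => _ [+ _]; apply. Qed.

Lemma subgroupV x : H x -> H x^-1.
Proof. by case: sgH => _ [_]; apply. Qed.

Lemma subgroup_lcosetT x y z : H (x^-1 * y) -> H (y^-1 * z) -> H (x^-1 * z).
Proof. by move=> Hxy /(subgroupM Hxy); rewrite mulgA mulgK. Qed.

Lemma subgroup_lcosetC x y : H (x^-1 * y) -> H (y^-1 * x).
Proof. by move/subgroupV; rewrite invgM invgK. Qed.

End Subgroup.

Section Transversal.
Variables (G : groupType) (K : G -> Prop) (n : nat) (s : seq G).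
Hypothesis sgK : subgroup K.
Hypothesis s_distinct :
  forall i j, i < n -> j < n -> i <> j -> ~ K ((nth 1 s i)^-1 * nth 1 s j).
Hypothesis s_cover : forall g, exists2 i, i < n & K ((nth 1 s i)^-1 * g).

Definition rep (i : 'I_n) : G := nth 1 s i.

Lemma rep_distinct i j : i != j -> ~ K ((rep i)^-1 * rep j).
Proof. by move=> neq; apply: s_distinct; rewrite ?ltn_ord // => /val_inj/eqP; apply/negP. Qed.

Lemma cidx_subproof g : exists i : 'I_n, K ((rep i)^-1 * g).
Proof. by case: (s_cover g) => i lt_in Ki; exists (Ordinal lt_in). Qed.

Definition cidx g : 'I_n := sval (cid (cidx_subproof g)).

Lemma cidxP g : K ((rep (cidx g))^-1 * g).
Proof. exact: svalP (cid (cidx_subproof g)). Qed.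

Lemma cidx_uniq g i : K ((rep i)^-1 * g) -> cidx g = i.
Proof.
move=> Ki; apply/eqP; apply/negPn/negP => /rep_distinct; apply.
exact: (subgroup_lcosetT sgK (cidxP g) (subgroup_lcosetC sgK Ki)).
Qed.

Lemma eq_cidx g g' : cidx g = cidx g' <-> K (g^-1 * g').
Proof.
split=> [e | Kgg'].
  have Kg' := cidxP g'; rewrite -e in Kg'.
  exact: (subgroup_lcosetT sgK (subgroup_lcosetC sgK (cidxP g)) Kg').
by apply/esym/cidx_uniq; exact: (subgroup_lcosetT sgK (cidxP g) Kgg').
Qed.

Lemma cidx_rep i : cidx (rep i) = i.
Proof. by apply: cidx_uniq; rewrite mulVg; apply: subgroup1. Qed.

Lemma cidx_lmul x g g' : cidx g = cidx g' -> cidx (x * g) = cidx (x * g').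
Proof. by move/eq_cidx => Kgg'; apply/eq_cidx; rewrite invgM -mulgA mulKg. Qed.

(** [#|cosets X|] is [|XK:K|]. *)
Definition cosets (X : G -> Prop) : {set 'I_n} :=
  [set i | `[< exists2 x, X x & cidx x = i >]].

Lemma cosetsP X i : reflect (exists2 x, X x & cidx x = i) (i \in cosets X).
Proof. by rewrite inE; apply: asboolP. Qed.

Lemma cosets_meeting_card X m : cosets_meeting X K m -> m = #|cosets X|.
Proof.
move=> [t [size_t [tX [t_distinct t_cover]]]].
pose f (j : 'I_m) := cidx (nth 1 t j).
have f_inj : injective f.
  move=> j k /eq_cidx Kjk; apply/val_inj/eqP; apply/negPn/negP => /eqP neq.
  exact: t_distinct (ltn_ord j) (ltn_ord k) neq Kjk.
suff -> : cosets X = f @: 'I_m by rewrite card_imset // card_ord.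
apply/setP => i; apply/cosetsP/imsetP => [[x Xx <-] | [j _ ->]].
  have [j lt_jm Kjx] := t_cover x Xx.
  by exists (Ordinal lt_jm) => //; apply/esym/eq_cidx.
by exists (nth 1 t j); first exact: tX (ltn_ord j).
Qed.

Definition cosets_rep (X : G -> Prop) (i : 'I_n) : G :=
  if pselect (exists2 x, X x & cidx x = i) is left ex then sval (cid2 ex) else 1.

Lemma cosets_repP X i : i \in cosets X -> X (cosets_rep X i) /\ cidx (cosets_rep X i) = i.
Proof.
rewrite /cosets_rep => /cosetsP ex; case: pselect => // ex'.
by case: (cid2 ex').
Qed.

Lemma cosets_meeting_cosets X : cosets_meeting X K #|cosets X|.
Proof.
pose e := enum (cosets X).
have lt_e j : j < #|cosets X| -> nth (cidx 1) e j \in cosets X.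
  by move=> lt_j; rewrite -mem_enum mem_nth // -cardE.
have nth_e j : j < #|cosets X| ->
    nth 1 (map (cosets_rep X) e) j = cosets_rep X (nth (cidx 1) e j).
  by move=> lt_j; rewrite (nth_map (cidx 1)) // -cardE.
exists (map (cosets_rep X) e); split; first by rewrite size_map -cardE.
split=> [i lt_i | ]; first by rewrite nth_e //; case: (cosets_repP (lt_e _ lt_i)).
split=> [i j lt_i lt_j neq | h Xh].
  rewrite !nth_e // => /eq_cidx.
  case: (cosets_repP (lt_e _ lt_i)) => _ ->; case: (cosets_repP (lt_e _ lt_j)) => _ ->.
  by move/eqP; rewrite nth_uniq ?enum_uniq -?cardE // => /eqP.
have hX : cidx h \in cosets X by apply/cosetsP; exists h.
have lt_h : index (cidx h) e < #|cosets X| by rewrite cardE index_mem mem_enum.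
exists (index (cidx h) e) => //; rewrite nth_e //; apply/eq_cidx.
by case: (cosets_repP (lt_e _ lt_h)) => _ ->; rewrite nth_index // mem_enum.
Qed.

Lemma card_cosets_full X : (forall x, X x) -> #|cosets X| = n.
Proof.
move=> Xall; rewrite -[n in RHS]card_ord; apply: eq_card => i.
by apply/cosetsP; exists (rep i); rewrite ?cidx_rep.
Qed.

Definition lact x i := cidx (x * rep i).

Lemma lact_inj x : injective (lact x).
Proof.
move=> i j /eq_cidx; rewrite invgM -mulgA mulKg => Kij.
by rewrite -(cidx_rep i) -(cidx_rep j); apply/eq_cidx.
Qed.

Definition rcoset (H : G -> Prop) x : G -> Prop := fun y => exists2 h, H h & y = h * x.

Lemma cosets_rcoset_normal H L x :
  normal_in H L -> L x -> cosets (rcoset H x) = lact x @: cosets H.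
Proof.
move=> [_ [sgL [_ nHL]]] Lx; apply/setP => i.
apply/cosetsP/imsetP => [[_ [h Hh ->] <-] | [j /cosetsP [h Hh <-] ->]].
  exists (cidx (x^-1 * h * x)).
    by apply/cosetsP; exists (x^-1 * h * x) => //; exact: (nHL _ _ Hh Lx).
  by rewrite /lact (cidx_lmul x (cidx_rep _)) !mulgA mulgV mul1g.
exists (x * h); last by rewrite /lact (cidx_lmul x (cidx_rep _)).
exists (x * h * x^-1); last by rewrite mulgVK.
by have := nHL h x^-1 Hh (subgroupV sgL Lx); rewrite invgK.
Qed.

Lemma cosets_rcoset_sub H x y h1 h2 : subgroup H -> H h1 -> H h2 ->
  cidx (h1 * x) = cidx (h2 * y) -> cosets (rcoset H x) \subset cosets (rcoset H y).
Proof.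
move=> sgH Hh1 Hh2 /eq_cidx Kxy; apply/subsetP => i /cosetsP [_ [h Hh ->] <-].
apply/cosetsP; exists (h * h1^-1 * h2 * y).
  exists (h * h1^-1 * h2) => //.
  exact: (subgroupM sgH (subgroupM sgH Hh (subgroupV sgH Hh1)) Hh2).
apply/esym/eq_cidx.
suff -> : (h * x)^-1 * (h * h1^-1 * h2 * y) = (h1 * x)^-1 * (h2 * y) by [].
by rewrite !invgM !mulgA mulgVK.
Qed.

Definition rcoset_blocks H (L : G -> Prop) : {set {set 'I_n}} :=
  [set A | `[< exists2 x, L x & A = cosets (rcoset H x) >]].

Lemma rcoset_blocksP H L A :
  reflect (exists2 x, L x & A = cosets (rcoset H x)) (A \in rcoset_blocks H L).
Proof. by rewrite inE; apply: asboolP. Qed.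

Lemma partition_rcoset_blocks H L :
  normal_in H L -> partition (rcoset_blocks H L) (cosets L).
Proof.
move=> [sgH [sgL [HL _]]].
have rcoset_id x : rcoset H x x by exists 1; rewrite ?mul1g //; exact: subgroup1.
rewrite /partition; apply/and3P; split.
- apply/eqP/setP => i; apply/bigcupP/cosetsP.
    move=> [_ /rcoset_blocksP [x Lx ->] /cosetsP [_ [h Hh ->] <-]].
    by exists (h * x) => //; exact: (subgroupM sgL (HL h Hh) Lx).
  move=> [x Lx <-]; exists (cosets (rcoset H x)); first by apply/rcoset_blocksP; exists x.
  by apply/cosetsP; exists x.
- apply/trivIsetP => _ _ /rcoset_blocksP [x _ ->] /rcoset_blocksP [y _ ->] neq.
  rewrite disjoint_subset; apply/subsetP => i /cosetsP [_ [h1 Hh1 ->] <-].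
  apply/negP => /cosetsP [_ [h2 Hh2 ->] /esym e]; case/eqP: neq; apply/eqP.
  rewrite eqEsubset (cosets_rcoset_sub sgH Hh1 Hh2 e).
  exact: (cosets_rcoset_sub sgH Hh2 Hh1 (esym e)).
- apply/negP => /rcoset_blocksP [x _ e].
  have : cidx x \in cosets (rcoset H x) by apply/cosetsP; exists x.
  by rewrite -e in_set0.
Qed.

Lemma dvdn_cosets_normal H L : normal_in H L -> (#|cosets H| %| #|cosets L|)%N.
Proof.
move=> nHL.
rewrite (@card_uniform_partition _ #|cosets H| _ _ _ (partition_rcoset_blocks nHL)).
  exact: dvdn_mull.
move=> _ /rcoset_blocksP [x Lx ->].
by rewrite (cosets_rcoset_normal nHL Lx) card_imset //; apply: lact_inj.
Qed.

Lemma dvdn_cosets_subnormal H : subnormal H -> (#|cosets H| %| n)%N.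
Proof.
elim=> [X Xall | X L nXL _ IH]; first by rewrite card_cosets_full.
exact: dvdn_trans (dvdn_cosets_normal nXL) IH.
Qed.

End Transversal.

Theorem proposition1p3 (G : groupType) (H K : G -> Prop) (n : nat) :
  subgroup H -> subnormal H -> subgroup K -> has_index K n ->
  (exists m, cosets_meeting H K m) /\
  (forall m, cosets_meeting H K m -> (m %| n)%N).
Proof.
move=> _ snH sgK [s [_ [s_distinct s_cover]]].
split; first by eexists; apply: cosets_meeting_cosets sgK s_distinct s_cover H.
move=> m /(cosets_meeting_card sgK s_distinct s_cover) ->.
exact: dvdn_cosets_subnormal.
Qed.
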